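(* $\mathrm{PRT}\subset\mathrm{PRT[O]}\subseteq\mathrm{PRT[T,O]}$ and $\mathrm{PRT}\subset\mathrm{PRT[T]}\subseteq\mathrm{PRT[T,O]}$, where $\subset$ denotes proper inclusion.
   Context: An indexed family is a sequence $\mathcal F=(F_n)_{n\in\mathbb N}$ of subsets of $\mathbb N$ that is uniformly computably enumerable; a set may occur with several indices, and $F\in\mathcal F$ means $F=F_n$ for some $n$. The minimal index $\mathrm{mi}_{\mathcal F}(F)$ is the least $n$ with $F_n=F$. An enumeration of a nonempty set $A$ is an infinite sequence of elements of $A$ in which every element of $A$ occurs; $f\restriction n$ is its initial segment of length $n$, and $\mathrm{content}(\sigma)$ is the set of entries of a finite string $\sigma$. A learner is a partial computable function from finite strings of natural numbers to natural numbers (hypotheses); hypothesis $h$ is interpreted as $F_h$. $M$ converges to a correct index on an enumeration $f$ of $F$ if there is $i$ with $M(f\restriction j)=M(f\restriction i)$ for all $j\ge i$ and $F_{M(f\restriction i)}=F$. $\mathcal F$ is PRT-learnable if there are a learner $M$ and a polynomial $p$ such that for every $F\in\mathcal F$ and every enumeration $f$ of $F$, $M$ converges to a correct index on $f$ in fewer than $p(\mathrm{mi}_{\mathcal F}(F))$ computation steps; if an oracle is used, the number of oracle queries is also bounded by $p(\mathrm{mi}_{\mathcal F}(F))$. A teacher is a computable map $T$ from finite strings to finite strings such that $T(\sigma)$ is a prefix of $T(\tau)$ whenever $\sigma$ is a prefix of $\tau$, and $\mathrm{content}(T(\sigma))\subseteq\mathrm{content}(\sigma)$. $\mathcal F$ is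 PRT[O]-learnable if some learner with access to a membership oracle for the target set PRT-learns it; PRT[T]-learnable if there is a learner-teacher pair $(M,T)$ such that $M$, fed with $T(f\restriction n)$ in place of $f\restriction n$ (i.e. on $T\circ f$), meets the PRT criterion for every enumeration $f$ of every member of $\mathcal F$ (only the learner's computation is counted); PRT[T,O]-learnable if as for PRT[T] but $M$ additionally has a membership oracle for the target and $T$ has access to the oracle answers $M$ receives. PRT, PRT[O], PRT[T], PRT[T,O] denote the classes of indexed families learnable in these senses. *)

From mathcomp Require Import all_boot all_algebra.

Set Implicit Arguments.
Unset Strict Implicit.
Unset Printing Implicit Defensive.

(* Tape symbols are natural numbers, 0 is the blank.  Symbols 1 and 2 are the *)
(* binary digits 0 and 1, 3 is an item separator, 4 a field separator.        *)

Inductive move := ML | MR | MS.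

Inductive action :=
| Act of nat (* new state *) & nat (* written symbol *) & move
| Ask of nat (* state if yes *) & nat (* state if no *).

(* A machine is a FINITE transition table: rules ((state, read symbol), act).
   The first matching rule is used; if none matches the machine halts.
   The start state is 0. *)
Definition TM := seq ((nat * nat) * action).

Definition oracle_free (M : TM) : bool :=
  all (fun r => if r.2 is Act _ _ _ then true else false) M.

(* configuration: state, left part of tape (reversed), scanned cell, right part *)
Record config := Config { cst : nat; cleft : seq nat; ccur : nat; cright : seq nat }.

Definition bitval (s : nat) : nat := if s == 2 then 1 else 0.
Definition isbit (s : nat) : bool := (s == 1) || (s == 2).

(* value of a binary word (most significant digit first) *)
Definition binval (w : seq nat) : nat := foldl (fun acc b => acc.*2 + bitval b) 0 w.

Definition head_bits (c : config) : seq nat :=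
  take (find (fun s => ~~ isbit s) (ccur c :: cright c)) (ccur c :: cright c).

Definition head_word (c : config) : seq nat :=
  take (find (fun s => s == 0) (ccur c :: cright c)) (ccur c :: cright c).

Definition do_move (d : move) (l : seq nat) (a : nat) (r : seq nat) : seq nat * nat * seq nat :=
  match d with
  | MS => (l, a, r)
  | MR => (a :: l, head 0 r, behead r)
  | ML => (behead l, head 0 l, a :: r)
  end.

Definition step (M : TM) (o : nat -> bool) (c : config) : option (config * option nat) :=
  match [seq r <- M | (r.1.1 == cst c) && (r.1.2 == ccur c)] with
  | [::] => None
  | r :: _ =>
    match r.2 with
    | Act q' s d =>
        let: (l, a, rr) := do_move d (cleft c) s (cright c) in
        Some (Config q' l a rr, None)
    | Ask qy qn =>
        let x := binval (head_bits c) in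
        Some (Config (if o x then qy else qn) (cleft c) (ccur c) (cright c), Some x)
    end
  end.

Fixpoint run (M : TM) (o : nat -> bool) (fuel : nat) (c : config)
  : option (nat * seq nat * config) :=
  match fuel with
  | 0 => None
  | k.+1 =>
    match step M o c with
    | None => Some (0, [::], c)
    | Some (c', oq) =>
      match run M o k c' with
      | None => None
      | Some (t, qs, cf) =>
          Some (t.+1, (if oq is Some x then [:: x] else [::]) ++ qs, cf)
      end
    end
  end.

Definition init (w : seq nat) : config := Config 0 [::] (head 0 w) (behead w).

Definition halts (M : TM) (o : nat -> bool) (w : seq nat) (t : nat) (qs : seq nat)
  (cf : config) : Prop :=
  exists fuel, run M o fuel (init w) = Some (t, qs, cf).

Definition out_nat (c : config) : nat := binval (head_bits c).

Fixpoint binF (fuel n : nat) : seq nat :=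
  match fuel with
  | 0 => [::]
  | k.+1 => if n == 0 then [::] else rcons (binF k n./2) (if odd n then 2 else 1)
  end.
(* binary digits of n, most significant first, no leading zeros (bin 0 = [::]) *)
Definition bin (n : nat) : seq nat := binF n n.

Definition enc (s : seq nat) : seq nat := flatten [seq rcons (bin a) 3 | a <- s].

(* encoding of (sigma, log of oracle answers) for teachers in PRT[T,O] *)
Definition enc_log (l : seq (nat * bool)) : seq nat :=
  enc (flatten [seq [:: x.1; nat_of_bool x.2] | x <- l]).
Definition enc2 (s : seq nat) (l : seq (nat * bool)) : seq nat :=
  enc s ++ 4 :: enc_log l.

Definition no_oracle : nat -> bool := fun _ => false.

Definition computable_str (T : seq nat -> seq nat) : Prop :=
  exists E : TM, oracle_free E /\
    forall s, exists t qs cf, halts E no_oracle (enc s) t qs cf /\ head_word cf = enc (T s).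

Definition computable_str2 (T : seq nat -> seq (nat * bool) -> seq nat) : Prop :=
  exists E : TM, oracle_free E /\
    forall s l, exists t qs cf, halts E no_oracle (enc2 s l) t qs cf /\
      head_word cf = enc (T s l).

(* indexed family: F n is the n-th set; uniformly c.e. means that
   {(n, x) | x \in F n} is semi-decided by a machine *)
Definition indexed_family (F : nat -> nat -> Prop) : Prop :=
  exists E : TM, oracle_free E /\
    forall n x, F n x <-> exists t qs cf, halts E no_oracle (enc [:: n; x]) t qs cf.

Definition same_set (A B : nat -> Prop) : Prop := forall x, A x <-> B x.

Definition is_mi (F : nat -> nat -> Prop) (A : nat -> Prop) (m : nat) : Prop :=
  same_set (F m) A /\ forall k, k < m -> ~ same_set (F k) A.

(* f is an enumeration of A (A is then nonempty) *)
Definition enumeration (A : nat -> Prop) (f : nat -> nat) : Prop :=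
  (forall k, A (f k)) /\ (forall x, A x -> exists k, f k = x).

Definition restr (f : nat -> nat) (n : nat) : seq nat := mkseq f n.

Definition content (s : seq nat) : nat -> Prop := fun x => x \in s.

Definition teacher (T : seq nat -> seq nat) : Prop :=
  computable_str T /\
  (forall s t, prefix s t -> prefix (T s) (T t)) /\
  (forall s x, content (T s) x -> content s x).

Definition teacher_O (T : seq nat -> seq (nat * bool) -> seq nat) : Prop :=
  computable_str2 T /\
  (forall s t l l', prefix s t -> prefix l l' -> prefix (T s l) (T t l')) /\
  (forall s l x, content (T s l) x -> content s x).

Definition peval (p : {poly nat}) (m : nat) : nat := p.[m]%R.

(* The learner, run on the inputs g 0, g 1, ..., has the runs
   (ts j steps, queries qss j, output ys j); it converges to a correct index
   for A in fewer than p(m) computation steps and oracle queries (counted in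
   total over the runs on g 0, ..., g i, i the convergence point). *)
Definition converges_within (F : nat -> nat -> Prop) (A : nat -> Prop)
  (p : {poly nat}) (m : nat) (ts : nat -> nat) (qss : nat -> seq nat)
  (ys : nat -> nat) : Prop :=
  exists i, (forall j, i <= j -> ys j = ys i) /\ same_set (F (ys i)) A /\
    \sum_(j < i.+1) ts j < peval p m /\
    \sum_(j < i.+1) size (qss j) < peval p m.

Definition is_oracle (A : nat -> Prop) (o : nat -> bool) : Prop :=
  forall x, o x = true <-> A x.

(* the generic learning criterion: g n is computed from the enumeration
   prefix and the oracle answers the learner got on g 0, ..., g (n-1) *)
Definition learns_with (F : nat -> nat -> Prop) (M : TM) (p : {poly nat})
  (G : seq nat -> seq (nat * bool) -> seq nat) : Prop :=
  forall n m, is_mi F (F n) m ->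
  forall f, enumeration (F n) f ->
  forall o, is_oracle (F n) o ->
  exists (g : nat -> seq nat) (ts : nat -> nat) (qss : nat -> seq nat)
         (cfs : nat -> config),
    (forall j, halts M o (enc (g j)) (ts j) (qss j) (cfs j) /\
       g j = G (restr f j)
               (flatten [seq [seq (x, o x) | x <- qss k] | k <- iota 0 j])) /\
    converges_within F (F n) p m ts qss (fun j => out_nat (cfs j)).

Definition PRT (F : nat -> nat -> Prop) : Prop :=
  exists (M : TM) (p : {poly nat}), oracle_free M /\
    learns_with F M p (fun s _ => s).

Definition PRT_O (F : nat -> nat -> Prop) : Prop :=
  exists (M : TM) (p : {poly nat}), learns_with F M p (fun s _ => s).

Definition PRT_T (F : nat -> nat -> Prop) : Prop :=
  exists (M : TM) (T : seq nat -> seq nat) (p : {poly nat}),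
    oracle_free M /\ teacher T /\ learns_with F M p (fun s _ => T s).

Definition PRT_TO (F : nat -> nat -> Prop) : Prop :=
  exists (M : TM) (T : seq nat -> seq (nat * bool) -> seq nat) (p : {poly nat}),
    teacher_O T /\ learns_with F M p T.

From mathcomp Require Import all_boot all_algebra zify.

Set Implicit Arguments.
Unset Strict Implicit.
Unset Printing Implicit Defensive.

(* The inclusions are immediate: a learner that ignores its oracle, or an
   identity teacher, is a special case of the richer model, and a teacher of
   PRT[T] serves in PRT[T,O] once a machine erases the oracle log from its
   input before running it.  Both separations use the family F_0 = {0},
   F_n = {0,1} (n > 0).  A single membership query about 1 identifies the
   target, and so does the first symbol of the enumeration once a teacher
   drops the leading zeros.  An unaided learner, however, must converge on
   {0} and on {0,1} within p(0) and p(1) steps; unless it always outputs 0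
   (and so never learns {0,1}) each run on a nonempty prefix costs a step, so
   it commits within p(0) + p(1) inputs, and an enumeration of {0,1} starting
   with that many zeros is indistinguishable from 0, 0, 0, ... *)

Section Runs.
Variables (M : TM) (o : nat -> bool).

Definition halts_from (c : config) (t : nat) (qs : seq nat) (cf : config) : Prop :=
  exists fuel, run M o fuel c = Some (t, qs, cf).

Definition terminates (c : config) : Prop := exists t qs cf, halts_from c t qs cf.

Inductive steps : config -> config -> Prop :=
| steps_refl c : steps c c
| steps_cons c c' c'' : step M o c = Some (c', None) -> steps c' c'' -> steps c c''.

Lemma steps_trans a b c : steps a b -> steps b c -> steps a c.
Proof. by elim=> // x y z Hxy _ IH /IH; apply: steps_cons. Qed.

Lemma steps1 c c' : step M o c = Some (c', None) -> steps c c'.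
Proof. by move=> H; apply: steps_cons H (steps_refl _). Qed.

Lemma halts_from_stop c : step M o c = None -> halts_from c 0 [::] c.
Proof. by move=> H; exists 1; rewrite /= H. Qed.

Lemma halts_from_steps c c' t qs cf :
  steps c c' -> halts_from c' t qs cf -> exists t', halts_from c t' qs cf.
Proof.
elim=> [x H|x y z Hxy _ IH /IH [t' [fuel Hrun]]]; first by exists t.
by exists t'.+1, fuel.+1; rewrite /= Hxy Hrun.
Qed.

Lemma terminates_steps c c' : steps c c' -> terminates c <-> terminates c'.
Proof.
elim=> // x y z Hxy _ <-; split=> [[t [qs [cf [[|fuel] //=]]]]|[t [qs [cf [fuel Hrun]]]]].
  rewrite Hxy; case Hrun: (run M o fuel y) => [[[t' qs'] cf']|] // _.
  by exists t', qs', cf', fuel.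
by exists t.+1, qs, cf, fuel.+1; rewrite /= Hxy Hrun.
Qed.

Lemma run_deterministic f1 f2 c r1 r2 :
  run M o f1 c = Some r1 -> run M o f2 c = Some r2 -> r1 = r2.
Proof.
elim: f1 f2 c r1 r2 => [|f1 IH] [|f2] c r1 r2 //=.
case: (step M o c) => [[c' oq]|]; last by move=> [<-] [<-].
case E1: (run M o f1 c') => [[[t qs] cf]|] //.
case E2: (run M o f2 c') => [[[t' qs'] cf']|] //.
have [-> -> ->] : (t, qs, cf) = (t', qs', cf') by apply: IH E1 E2.
by move=> [<-] [<-].
Qed.

Lemma halts_from_det c t qs cf t' qs' cf' :
  halts_from c t qs cf -> halts_from c t' qs' cf' -> [/\ t = t', qs = qs' & cf = cf'].
Proof. by move=> [f1 H1] [f2 H2]; case: (run_deterministic H1 H2) => -> -> ->. Qed.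

Lemma halts_from_gt0 c t qs cf : step M o c <> None -> halts_from c t qs cf -> 0 < t.
Proof.
move=> Hstep [[|fuel] //=]; case: (step M o c) Hstep => [[c' oq]|] // _.
by case: (run M o fuel c') => [[[? ?] ?]|] // [<-].
Qed.

End Runs.

Lemma oracle_free_filter M (P : pred (nat * nat * action)) r rs :
  oracle_free M -> filter P M = r :: rs -> if r.2 is Act _ _ _ then true else false.
Proof.
move=> Mof E.
have /andP[-> _] // : all (fun r => if r.2 is Act _ _ _ then true else false) (r :: rs).
by rewrite -E all_filter; apply: sub_all Mof => x Hx; apply/implyP.
Qed.

Lemma step_oracle_free M o o' c : oracle_free M -> step M o c = step M o' c.
Proof.
move=> Mof; rewrite /step; case E: [seq r <- M | _] => [|r rs] //.
by have := oracle_free_filter Mof E; case: r.2.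
Qed.

Lemma halts_from_oracle_free M o o' c t qs cf :
  oracle_free M -> halts_from M o c t qs cf -> halts_from M o' c t qs cf.
Proof.
move=> Mof [fuel Hrun]; exists fuel; rewrite -{}Hrun.
elim: fuel c => [|fuel IH] c //=; rewrite (step_oracle_free o' o c Mof).
by case: (step M o c) => [[c' oq]|] //; rewrite IH.
Qed.

Lemma bin_bits n : all isbit (bin n).
Proof.
rewrite /bin; elim: n {-1}n => [|k IH] n //=; case: (n == 0) => //.
by rewrite all_rcons IH andbT; case: (odd n).
Qed.

Lemma binF_msb k n : 0 < n <= k -> exists b, binF k n = 2 :: b.
Proof.
elim: k n => [|k IH] n; first by case: n.
case/andP=> n_gt0 n_le /=; rewrite eqn0Ngt n_gt0 /=.
case: (posnP n./2) => [half0|half_gt0].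
  have n1 : n = 1 by move: n_gt0; rewrite -[n]odd_double_half half0; case: (odd n).
  by rewrite n1; case: k {IH n_le} => [|k]; exists [::].
have [|b ->] := IH n./2; first by rewrite half_gt0 leq_half_double; lia.
by exists (rcons b (if odd n then 2 else 1)).
Qed.

Lemma bin_msb n : 0 < n -> exists b, bin n = 2 :: b.
Proof. by move=> n_gt0; apply: binF_msb; rewrite n_gt0 leqnn. Qed.

Lemma bin_two_digits n : 1 < n -> exists y b, bin n = 2 :: y :: b.
Proof.
case: n => [|n] // n_gt1; rewrite /bin /= -/binF.
have [|b ->] := @binF_msb n n.+1./2; first by rewrite half_gt0 n_gt1 leq_half_double; lia.
set d := if odd n.+1 then 2 else 1.
by case: b => [|y b]; [exists d, [::] | exists y, (rcons b d)].
Qed.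

Lemma enc_symbols s : all (fun x => 0 < x <= 3) (enc s).
Proof.
elim: s => //= a s IH; rewrite all_cat IH andbT all_rcons /=.
by apply: sub_all (bin_bits a) => x /orP[] /eqP ->.
Qed.

Lemma head_word_enc q l s :
  head_word (Config q l (head 0 (enc s)) (behead (enc s))) = enc s.
Proof.
rewrite /head_word /=; case: (enc s) (enc_symbols s) => [|x w] //= /andP[x_pos w_pos].
rewrite eqn0Ngt (andP x_pos).1 /=; congr cons; rewrite -[RHS]take_size; congr take.
by apply: hasNfind; apply/hasPn => y /(allP w_pos) /andP[]; rewrite lt0n.
Qed.

Definition eq_tape (l l' : seq nat) : Prop := forall i, nth 0 l i = nth 0 l' i.

Lemma eq_tape_cat_blanks l k : eq_tape (l ++ nseq k 0) l.
Proof.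
by move=> i; rewrite nth_cat; case: ltnP => // i_ge; rewrite nth_nseq if_same nth_default.
Qed.

Lemma head_word_eq_tape c d :
  ccur c = ccur d -> eq_tape (cright c) (cright d) -> head_word c = head_word d.
Proof.
rewrite /head_word => -> eq_r.
have : eq_tape (ccur d :: cright c) (ccur d :: cright d) by case.
elim: (ccur d :: cright c) (ccur d :: cright d) => [|x s IH] [|y s'] eq_s //=.
- by have /= <- := eq_s 0.
- by have /= -> := eq_s 0.
have /= <- := eq_s 0; case: (x == 0) => //=.
by congr cons; apply: IH => i; apply: (eq_s i.+1).
Qed.

Definition shift_action (a : action) : action :=
  match a with Act q s d => Act q.+3 s d | Ask qy qn => Ask qy.+3 qn.+3 end.

Definition shift_rule (r : nat * nat * action) : nat * nat * action :=
  ((r.1.1.+3, r.1.2), shift_action r.2).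

(* States 0-2 scan right to the end of the input, erase it back to and
   including the separator 4, and return to its left end; the machine E then
   runs with its states shifted by 3. *)
Definition erase_log_prefix : TM :=
  [:: ((0,1),Act 0 1 MR); ((0,2),Act 0 2 MR); ((0,3),Act 0 3 MR); ((0,4),Act 0 4 MR);
      ((0,0),Act 1 0 ML);
      ((1,1),Act 1 0 ML); ((1,2),Act 1 0 ML); ((1,3),Act 1 0 ML); ((1,4),Act 2 0 ML);
      ((2,1),Act 2 1 ML); ((2,2),Act 2 2 ML); ((2,3),Act 2 3 ML); ((2,0),Act 3 0 MR)].

Definition erase_log (E : TM) : TM := erase_log_prefix ++ map shift_rule E.

Lemma oracle_free_erase_log E : oracle_free E -> oracle_free (erase_log E).
Proof. by rewrite /oracle_free all_cat all_map; apply: sub_all => -[? []]. Qed.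

Definition shifted (d c : config) : Prop :=
  [/\ cst d = (cst c).+3, eq_tape (cleft d) (cleft c), ccur d = ccur c
    & eq_tape (cright d) (cright c)].

Lemma do_move_eq_tape mv l l' a r r' : eq_tape l l' -> eq_tape r r' ->
  let: (l1, a1, r1) := do_move mv l a r in let: (l2, a2, r2) := do_move mv l' a r' in
  [/\ eq_tape l1 l2, a1 = a2 & eq_tape r1 r2].
Proof.
move=> eq_l eq_r; case: mv => /=; split=> //; rewrite -?nth0 //.
- by move=> i; rewrite !nth_behead.
- by case.
- by case.
- by move=> i; rewrite !nth_behead.
Qed.

Lemma step_erase_log E o c d : oracle_free E -> shifted d c ->
  if step E o c is Some (c1, oq)
  then exists2 d1, step (erase_log E) o d = Some (d1, oq) & shifted d1 c1
  else step (erase_log E) o d = None.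
Proof.
move=> Eof; case: d => qd ld ad rd; case: c => qc lc ac rc [/= -> eq_l -> eq_r].
rewrite /step filter_cat /= filter_map /=; case E1: [seq r <- E | _] => [|[[q0 s0] act] rs] //=.
have := oracle_free_filter Eof E1; case: act {E1} => // q' s' mv _ /=.
have := do_move_eq_tape mv s' eq_l eq_r.
case: (do_move mv ld s' rd) => [[l1 a1] r1]; case: (do_move mv lc s' rc) => [[l2 a2] r2].
by case=> eq1 -> eq3; exists (Config q'.+3 l1 a2 r1).
Qed.

Lemma run_erase_log E o fuel c d t qs cf : oracle_free E -> shifted d c ->
  run E o fuel c = Some (t, qs, cf) ->
  exists2 cf', run (erase_log E) o fuel d = Some (t, qs, cf') & shifted cf' cf.
Proof.
move=> Eof; elim: fuel c d t qs cf => [|fuel IH] c d t qs cf sh_dc //=.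
have := step_erase_log o Eof sh_dc; case: (step E o c) => [[c1 oq]|].
- case=> d1 -> sh1; case Er: (run E o fuel c1) => [[[t' qs'] cf1]|] // [<- <- <-].
  by have [cf' -> sh'] := IH _ _ _ _ _ sh1 Er; exists cf'.
- by move=> -> [<- <- <-]; exists d.
Qed.

Section ErasePhases.
Variables (E : TM) (o : nat -> bool).
Local Notation steps := (steps (erase_log E) o).

Lemma erase_log_scan l w : all (fun x => 0 < x <= 4) w ->
  steps (Config 0 l (head 0 w) (behead w)) (Config 0 (catrev w l) 0 [::]).
Proof.
elim: w l => [|x w IH] l /=; first by move=> _; constructor.
case/andP=> x_sym w_sym; apply: steps_cons (IH _ w_sym).
by case: x x_sym => [|[|[|[|[|x]]]]].
Qed.

Lemma erase_log_erase q L R : all (fun x => 0 < x <= 3) q ->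
  steps (Config 1 (behead (q ++ 4 :: L)) (head 0 (q ++ 4 :: L)) R)
        (Config 1 L 4 (ncons (size q) 0 R)).
Proof.
elim: q R => [|x q IH] R /=; first by move=> _; constructor.
case/andP=> x_sym q_sym; rewrite /ncons -iterS iterSr; apply: steps_cons (IH _ q_sym).
by case: x x_sym => [|[|[|[|x]]]].
Qed.

Lemma erase_log_rewind q R : all (fun x => 0 < x <= 3) q ->
  steps (Config 2 (behead q) (head 0 q) R) (Config 2 [::] 0 (catrev q R)).
Proof.
elim: q R => [|x q IH] R /=; first by move=> _; constructor.
case/andP=> x_sym q_sym; apply: steps_cons (IH _ q_sym).
by case: x x_sym => [|[|[|[|x]]]].
Qed.

Lemma erase_log_prepare u v :
  all (fun x => 0 < x <= 3) u -> all (fun x => 0 < x <= 3) v ->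
  exists k, steps (init (u ++ 4 :: v))
    (Config 3 [:: 0] (head 0 (u ++ nseq k 0)) (behead (u ++ nseq k 0))).
Proof.
move=> u_sym v_sym; exists (size v).+2.
have w_sym : all (fun x => 0 < x <= 4) (u ++ 4 :: v).
  have sym4 : subpred (fun x => 0 < x <= 3) (fun x => 0 < x <= 4).
    by move=> x /andP[-> /leq_trans ->].
  by rewrite all_cat /= (sub_all sym4 u_sym) (sub_all sym4 v_sym).
apply: steps_trans (erase_log_scan [::] w_sym) _.
rewrite catrevE cats0 rev_cat rev_cons cat_rcons.
apply: steps_cons (steps_trans (erase_log_erase _ _ _) _) => //; first by rewrite all_rev.
apply: steps_cons (steps_trans (erase_log_rewind _ _) _) => //; first by rewrite all_rev.
have -> : catrev (rev u) (0 :: ncons (size (rev v)) 0 [:: 0]) = u ++ nseq (size v).+2 0.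
  by rewrite catrevE revK size_rev; congr cat; elim: (size v) => //= n ->.
exact: steps1.
Qed.

End ErasePhases.

Lemma computable_str2_const T : computable_str T -> computable_str2 (fun s _ => T s).
Proof.
case=> E [Eof HE]; exists (erase_log E); split; first exact: oracle_free_erase_log.
move=> s l; have [t [qs [cf [[fuel Hrun] Hcf]]]] := HE s.
have log_sym : all (fun x => 0 < x <= 3) (enc_log l) by apply: enc_symbols.
have [k prep] := erase_log_prepare E no_oracle (enc_symbols s) log_sym.
have sh : shifted (Config 3 [:: 0] (head 0 (enc s ++ nseq k 0)) (behead (enc s ++ nseq k 0)))
                  (init (enc s)).
  split=> //=; first by case=> [|i]; rewrite /= ?nth_nil.
    by rewrite -!nth0 eq_tape_cat_blanks.
  by move=> i; rewrite !nth_behead eq_tape_cat_blanks.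
have [cf' Hrun' [_ _ cur_eq right_eq]] := run_erase_log Eof sh Hrun.
have [t' Ht'] := halts_from_steps prep (ex_intro _ fuel Hrun').
by exists t', qs, cf'; split; [exact: Ht' | rewrite -Hcf; apply: head_word_eq_tape].
Qed.

Lemma computable_str_id : computable_str id.
Proof.
exists [::]; split=> // s; exists 0, [::], (init (enc s)); split; first by exists 1.
exact: head_word_enc.
Qed.

Lemma teacher_id : teacher id.
Proof. by split; first exact: computable_str_id. Qed.

Lemma teacher_O_const T : teacher T -> teacher_O (fun s _ => T s).
Proof.
case=> T_comp [T_mono T_content]; split; first exact: computable_str2_const.
split=> [s t l l' st_prefix _ | s l x]; [exact: T_mono | exact: T_content].
Qed.

Definition zero_one (n x : nat) : bool := (x == 0) || (0 < n) && (x == 1).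

Definition zero_one_family : nat -> nat -> Prop := fun n x => zero_one n x.

(* Reads the word [bin n; 3; bin x; 3]: state 1 means n = 0, state 3 means
   n > 0 and the head is at the start of [bin x]; state 9 loops forever. *)
Definition zero_one_semidecider : TM :=
  [:: ((0,3),Act 1 3 MR); ((0,2),Act 2 2 MR); ((1,2),Act 9 5 MS);
      ((2,1),Act 2 1 MR); ((2,2),Act 2 2 MR); ((2,3),Act 3 3 MR);
      ((3,2),Act 4 2 MR); ((4,1),Act 9 5 MS); ((4,2),Act 9 5 MS); ((9,5),Act 9 5 MS)].

Section Semidecider.
Variable o : nat -> bool.
Local Notation SD := zero_one_semidecider.
Local Notation steps := (steps SD o).
Local Notation terminates := (terminates SD o).

Lemma semidecider_loops l r : ~ terminates (Config 9 l 5 r).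
Proof.
have loop fuel : run SD o fuel (Config 9 l 5 r) = None by elim: fuel => //= fuel ->.
by move=> [t [qs [cf [fuel]]]]; rewrite loop.
Qed.

Lemma semidecider_stops c : step SD o c = None -> terminates c.
Proof. by move=> /halts_from_stop stop; exists 0, [::], c. Qed.

Lemma semidecider_skip_bits l b X : all isbit b ->
  exists l', steps (Config 2 l (head 0 (b ++ 3 :: X)) (behead (b ++ 3 :: X)))
                   (Config 2 l' 3 X).
Proof.
elim: b l => [|y b IH] l /=; first by exists l; constructor.
case/andP=> y_bit /(IH (y :: l)) [l' H]; exists l'; apply: steps_cons H.
by case/orP: y_bit => /eqP ->.
Qed.

Lemma semidecider_n0 l x :
  terminates (Config 1 l (head 0 (rcons (bin x) 3)) (behead (rcons (bin x) 3))) <-> x = 0.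
Proof.
case: (posnP x) => [-> | x_gt0]; first by split=> // _; exact: semidecider_stops.
have [b ->] := bin_msb x_gt0; split=> [|x_eq0]; last by move: x_gt0; rewrite x_eq0.
have loop : steps (Config 1 l 2 (rcons b 3)) (Config 9 l 5 (rcons b 3)) by exact: steps1.
by move/(terminates_steps loop)/semidecider_loops.
Qed.

Lemma semidecider_n_gt0 l x :
  terminates (Config 3 l (head 0 (rcons (bin x) 3)) (behead (rcons (bin x) 3))) <-> x <= 1.
Proof.
case: (ltngtP x 1) => [x_lt1 | x_gt1 | ->].
- have -> : x = 0 by case: x x_lt1.
  by split=> // _; exact: semidecider_stops.
- have [y [b bin_x]] := bin_two_digits x_gt1.
  have /andP[y_bit _] : all isbit (y :: b) by have := bin_bits x; rewrite bin_x => /andP[].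
  split=> //.
  have loop : steps (Config 3 l 2 (y :: rcons b 3)) (Config 9 (2 :: l) 5 (rcons b 3)).
    apply: (@steps_cons _ _ _ (Config 4 (2 :: l) y (rcons b 3))) (steps1 _) => //.
    by case/orP: y_bit => /eqP ->.
  by rewrite bin_x; move/(terminates_steps loop)/semidecider_loops.
- have stop : steps (Config 3 l 2 [:: 3]) (Config 4 (2 :: l) 3 [::]) by exact: steps1.
  by split=> // _; apply/(terminates_steps stop); exact: semidecider_stops.
Qed.

End Semidecider.

Lemma zero_one_semidecider_spec n x :
  zero_one_family n x <-> terminates zero_one_semidecider no_oracle (init (enc [:: n; x])).
Proof.
rewrite /zero_one_family /zero_one /enc /= cats0.
set X := rcons (bin x) 3.
case: (posnP n) => [-> | n_gt0].
  have start : steps zero_one_semidecider no_oracle (init (3 :: X))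
                 (Config 1 [:: 3] (head 0 X) (behead X)) by exact: steps1.
  rewrite (terminates_steps start) semidecider_n0 orbF.
  by split=> /eqP.
have [b bin_n] := bin_msb n_gt0.
have b_bits : all isbit b by have := bin_bits n; rewrite bin_n => /andP[].
have [l' skip] := semidecider_skip_bits no_oracle [:: 2] X b_bits.
have start : steps zero_one_semidecider no_oracle (init (rcons (bin n) 3 ++ X))
               (Config 3 (3 :: l') (head 0 X) (behead X)).
  rewrite bin_n rcons_cons cat_cons cat_rcons; apply: steps_cons (steps_trans skip _) => //.
  exact: steps1.
rewrite (terminates_steps start) semidecider_n_gt0.
by case: x {X start skip} => [|[|x]].
Qed.

Lemma zero_one_indexed : indexed_family zero_one_family.
Proof. by exists zero_one_semidecider; split=> // n x; exact: zero_one_semidecider_spec. Qed.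

Lemma zero_one_family_pos n n' :
  0 < n -> 0 < n' -> same_set (zero_one_family n) (zero_one_family n').
Proof. by move=> n_pos n'_pos x; rewrite /zero_one_family /zero_one n_pos n'_pos. Qed.

Lemma zero_one_le1 n x : zero_one n x -> x <= 1.
Proof. by rewrite /zero_one; case: x => [|[|x]] //=; rewrite andbF. Qed.

(* Writes bin 1 in front of a separator, asks whether 1 is in the target, and
   erases the digit if not: the output is 1 or 0. *)
Definition ask_one_learner : TM :=
  [:: ((0,0),Act 1 3 ML); ((0,1),Act 1 3 ML); ((0,2),Act 1 3 ML); ((0,3),Act 1 3 ML);
      ((1,0), Act 2 2 MS); ((2,2), Ask 3 4); ((4,2), Act 5 3 MS)].

Definition ask_one_final (o : nat -> bool) (w : seq nat) : config :=
  if o 1 then Config 3 [::] 2 (3 :: behead w) else Config 5 [::] 3 (3 :: behead w).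

Lemma ask_one_learner_halts o s :
  halts ask_one_learner o (enc s) (if o 1 then 3 else 4) [:: 1] (ask_one_final o (enc s)).
Proof.
have head_le3 : head 0 (enc s) <= 3.
  by case: (enc s) (enc_symbols s) => [|x w] //= /andP[/andP[_ ->]].
exists 5; rewrite /init /ask_one_final.
by case: (head 0 (enc s)) head_le3 => [|[|[|[|h]]]] // _; rewrite /= /head_bits /=; case: (o 1).
Qed.

Lemma out_ask_one_final o w : out_nat (ask_one_final o w) = o 1.
Proof. by rewrite /ask_one_final; case: (o 1). Qed.

Lemma PRT_O_zero_one : PRT_O zero_one_family.
Proof.
exists ask_one_learner, (polyC 5) => n m _ f _ o o_spec.
exists (restr f), (fun _ => if o 1 then 3 else 4), (fun _ => [:: 1]),
  (fun j => ask_one_final o (enc (restr f j))).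
split; first by move=> j; split; first exact: ask_one_learner_halts.
have o1 : o 1 = (0 < n).
  apply/idP/idP => [/o_spec | n_pos]; first by rewrite /zero_one_family /zero_one /= andbT.
  by apply/o_spec; rewrite /zero_one_family /zero_one n_pos.
exists 0; rewrite /peval hornerC !big_ord1.
split; first by move=> j _; rewrite !out_ask_one_final.
split; last by case: (o 1).
rewrite out_ask_one_final o1.
by case: (posnP n) => [-> // | n_pos]; apply: zero_one_family_pos.
Qed.

Fixpoint drop_zeros (s : seq nat) : seq nat :=
  if s is x :: s' then (if x == 0 then drop_zeros s' else s) else [::].

Lemma drop_zeros_prefix s r : prefix (drop_zeros s) (drop_zeros (s ++ r)).
Proof.
elim: s => [|x s IH] /=; first by rewrite prefix0s.
by case: (x == 0) => //; exact: prefix_prefix.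
Qed.

Lemma mem_drop_zeros s x : x \in drop_zeros s -> x \in s.
Proof. by elim: s => //= y s IH; case: (y == 0) => // /IH; rewrite in_cons orbC => ->. Qed.

(* bin 0 is empty, so each leading 0 of the string is a lone separator 3 in
   its encoding. *)
Definition drop_zeros_machine : TM := [:: ((0,3), Act 0 3 MR)].

Lemma drop_zeros_machine_steps o s l : exists l',
  steps drop_zeros_machine o (Config 0 l (head 0 (enc s)) (behead (enc s)))
    (Config 0 l' (head 0 (enc (drop_zeros s))) (behead (enc (drop_zeros s)))).
Proof.
elim: s l => [|x s IH] l /=; first by exists l; constructor.
case: eqP => [-> | _]; last by exists l; constructor.
by have [l' H] := IH (3 :: l); exists l'; apply: steps_cons H.
Qed.

Lemma computable_drop_zeros : computable_str drop_zeros.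
Proof.
exists drop_zeros_machine; split=> // s.
have [l' zeros] := drop_zeros_machine_steps no_oracle s [::].
have [t Ht] : exists t, halts drop_zeros_machine no_oracle (enc s) t [::]
    (Config 0 l' (head 0 (enc (drop_zeros s))) (behead (enc (drop_zeros s)))).
  apply: halts_from_steps zeros (halts_from_stop _).
  elim: s => [|x s IH] //=; case: eqP => [// | /eqP].
  by rewrite -lt0n /enc /= => /bin_msb [b ->].
by exists t, [::]; eexists; split; [exact: Ht | exact: head_word_enc].
Qed.

Lemma teacher_drop_zeros : teacher drop_zeros.
Proof.
split; first exact: computable_drop_zeros.
by split=> [s t /prefixP [r ->] | s x /mem_drop_zeros]; first exact: drop_zeros_prefix.
Qed.

Lemma out_init_enc_drop_zeros s :
  all (fun x => x <= 1) s -> out_nat (init (enc (drop_zeros s))) = (1 \in s).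
Proof. by elim: s => //= -[|[|x]] s IH //= /IH. Qed.

Lemma PRT_T_zero_one : PRT_T zero_one_family.
Proof.
exists [::], drop_zeros, (polyC 1); split=> //; split; first exact: teacher_drop_zeros.
move=> n m _ f [f_in f_onto] o _.
exists (fun j => drop_zeros (restr f j)), (fun _ => 0), (fun _ => [::]),
  (fun j => init (enc (drop_zeros (restr f j)))).
split; first by move=> j; split=> //; exists 1.
have out_j j : out_nat (init (enc (drop_zeros (restr f j)))) = (1 \in restr f j).
  apply: out_init_enc_drop_zeros; apply/allP => _ /mapP [k _ ->].
  exact: zero_one_le1 (f_in k).
have time i : \sum_(j < i.+1) (fun _ => 0) j < peval (polyC 1) m.
  by rewrite big1 // /peval hornerC.
case: (posnP n) => [n0 | n_pos].
  have no_one j : (1 \in restr f j) = false.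
    by apply/mapP => -[k _ /esym f_k]; have := f_in k; rewrite f_k n0.
  exists 0; split; first by move=> j _; rewrite !out_j !no_one.
  by rewrite out_j no_one n0; split=> //; split; apply: time.
have [k f_k] : exists k, f k = 1 by apply: f_onto; rewrite /zero_one_family /zero_one n_pos.
have one j : k < j -> 1 \in restr f j by move=> k_j; apply/mapP; exists k; rewrite ?mem_iota.
exists k.+1; split; first by move=> j k_j; rewrite !out_j !one // (leq_trans _ k_j).
by rewrite out_j one //; split; [exact: zero_one_family_pos | split; apply: time].
Qed.

Lemma learns_with_restr F M p n m f o :
  learns_with F M p (fun s _ => s) -> is_mi F (F n) m ->
  enumeration (F n) f -> is_oracle (F n) o ->
  exists ts qss cfs,
    (forall j, halts M o (enc (restr f j)) (ts j) (qss j) (cfs j)) /\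
    converges_within F (F n) p m ts qss (fun j => out_nat (cfs j)).
Proof.
move=> learns mi f_enum o_spec.
have [g [ts [qss [cfs [runs conv]]]]] := learns n m mi f f_enum o o_spec.
by exists ts, qss, cfs; split=> // j; have [+ <-] := runs j.
Qed.

Lemma leq_sum_gt0 (ts : nat -> nat) i :
  (forall j, 0 < j -> 0 < ts j) -> i <= \sum_(j < i.+1) ts j.
Proof.
move=> ts_gt0; rewrite -(big_mkord xpredT ts).
elim: i => // i IH; rewrite big_nat_recr //=.
by have := ts_gt0 i.+1 isT; lia.
Qed.

Lemma init_enc_restr (f : nat -> nat) j : f 0 = 0 ->
  init (enc (restr f j.+1)) = Config 0 [::] 3 (enc (map f (iota 1 j))).
Proof. by rewrite /restr /mkseq /= => ->. Qed.

Lemma step_at_separator M :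
  (forall o w, step M o (Config 0 [::] 3 w) = None) \/
  (forall o w, step M o (Config 0 [::] 3 w) <> None).
Proof.
rewrite /step /=; case: [seq r <- M | _] => [|r rs]; [by left | right => o w].
by case: r.2 => [q s d|qy qn] //=; case: do_move => [[? ?] ?].
Qed.

Lemma restr_runs_time_gt0 M o f ts qss cfs :
  (forall w, step M o (Config 0 [::] 3 w) <> None) -> f 0 = 0 ->
  (forall j, halts M o (enc (restr f j)) (ts j) (qss j) (cfs j)) ->
  forall j, 0 < j -> 0 < ts j.
Proof.
move=> moves f_0 runs [|j] // _; have := runs j.+1; rewrite /halts init_enc_restr //.
exact: halts_from_gt0 (moves _).
Qed.

Lemma zero_one_mi0 : is_mi zero_one_family (zero_one_family 0) 0.
Proof. by []. Qed.

Lemma zero_one_family_neq01 : ~ same_set (zero_one_family 0) (zero_one_family 1).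
Proof. by move=> /(_ 1) [_ /(_ isT)]. Qed.

Lemma zero_one_mi1 : is_mi zero_one_family (zero_one_family 1) 1.
Proof. by split=> // k; rewrite ltnS leqn0 => /eqP ->; exact: zero_one_family_neq01. Qed.

Lemma not_PRT_zero_one : ~ PRT zero_one_family.
Proof.
move=> [M [p [Mof learns]]].
pose K := peval p 0 + peval p 1.
pose f0 (k : nat) := 0.
pose f1 k := nat_of_bool (K < k).
have f0_enum : enumeration (zero_one_family 0) f0.
  by split=> // x; rewrite /zero_one_family /zero_one orbF => /eqP ->; exists 0.
have f1_enum : enumeration (zero_one_family 1) f1.
  split=> [k | x]; first by rewrite /f1; case: (K < k).
  rewrite /zero_one_family /zero_one /= => /orP[] /eqP ->; first by exists 0.
  by exists K.+1; rewrite /f1 ltnSn.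
have [ts0 [qss0 [cfs0 [runs0 [i0 [conv0 [ok0 [time0 _]]]]]]]] :=
  learns_with_restr learns zero_one_mi0 f0_enum (fun x => iff_refl _).
have [ts1 [qss1 [cfs1 [runs1 [i1 [conv1 [ok1 [time1 _]]]]]]]] :=
  learns_with_restr learns zero_one_mi1 f1_enum (fun x => iff_refl _).
have wrong y : same_set (zero_one_family y) (zero_one_family 0) ->
               same_set (zero_one_family y) (zero_one_family 1) -> False.
  by move=> y0 y1; apply: zero_one_family_neq01 => x; rewrite -(y0 x) -(y1 x).
case: (step_at_separator M) => [stops | moves].
  have out1 j : out_nat (cfs1 j.+1) = 0.
    have := runs1 j.+1; rewrite /halts init_enc_restr // => run1.
    by have [_ _ ->] := halts_from_det run1 (halts_from_stop (stops _ _)).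
  apply: (wrong 0); last by rewrite -(out1 i1) (conv1 i1.+1).
  by move=> x.
have i0_lt := leq_ltn_trans (leq_sum_gt0 i0 (restr_runs_time_gt0 (moves _) erefl runs0)) time0.
have i1_lt := leq_ltn_trans (leq_sum_gt0 i1 (restr_runs_time_gt0 (moves _) erefl runs1)) time1.
pose j := maxn i0 i1.
have same_input : restr f0 j = restr f1 j.
  apply/eq_in_map => k; rewrite mem_iota add0n => /andP[_ k_lt].
  by rewrite /f1 ltnNge (leq_trans (ltnW k_lt)) // geq_max; lia.
have run1 := runs1 j; rewrite -same_input in run1.
have [_ _ same_cf] := halts_from_det (halts_from_oracle_free (zero_one 1) Mof (runs0 j)) run1.
apply: (wrong (out_nat (cfs0 j))); first by rewrite (conv0 j) // leq_maxl.
by rewrite same_cf (conv1 j) // leq_maxr.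
Qed.

Theorem proposition3p5 :
  (* PRT ⊂ PRT[O] (proper) *)
  ((forall F, indexed_family F -> PRT F -> PRT_O F) /\
   (exists F, indexed_family F /\ PRT_O F /\ ~ PRT F)) /\
  (* PRT[O] ⊆ PRT[T,O] *)
  (forall F, indexed_family F -> PRT_O F -> PRT_TO F) /\
  (* PRT ⊂ PRT[T] (proper) *)
  ((forall F, indexed_family F -> PRT F -> PRT_T F) /\
   (exists F, indexed_family F /\ PRT_T F /\ ~ PRT F)) /\
  (* PRT[T] ⊆ PRT[T,O] *)
  (forall F, indexed_family F -> PRT_T F -> PRT_TO F).
Proof.
have zero_one_witness P : P zero_one_family -> exists F, indexed_family F /\ P F /\ ~ PRT F.
  move=> HP; exists zero_one_family.
  by split; [exact: zero_one_indexed | split; [|exact: not_PRT_zero_one]].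
split; [split|split; [|split; [split|]]].
- by move=> F _ [M [p [_ learns]]]; exists M, p.
- exact/zero_one_witness/PRT_O_zero_one.
- move=> F _ [M [p learns]]; exists M, (fun s _ => s), p.
  by split=> //; exact: teacher_O_const teacher_id.
- move=> F _ [M [p [Mof learns]]]; exists M, id, p.
  by split=> //; split; first exact: teacher_id.
- exact/zero_one_witness/PRT_T_zero_one.
- move=> F _ [M [T [p [_ [T_teacher learns]]]]]; exists M, (fun s _ => T s), p.
  by split=> //; exact: teacher_O_const.
Qed.
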